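(* Let $R$ be a unital subring of $\mathbb C$ closed under complex conjugation that has an essentially unique partition of the unit, and let $E$ be a finite graph. Then every projection in $L_R(E)$ lies in the diagonal $\mathcal D(L_R(E))$.
   Context: A unital subring $R\subseteq\mathbb C$ closed under complex conjugation has an essentially unique partition of the unit if whenever $\lambda_1,\dots,\lambda_n\in R$ satisfy $\sum_{i=1}^n|\lambda_i|^2=1$, all but one of the $\lambda_i$ are zero. A graph $E=(E^0,E^1,r,s)$ has vertices $E^0$, edges $E^1$, and range and source maps $r,s$. A path is a word $e_1\cdots e_n$ with $r(e_i)=s(e_{i+1})$; vertices are paths of length $0$; $E^*$ is the set of finite paths. The Leavitt path algebra $L_R(E)$ is the universal $R$-algebra generated by pairwise orthogonal idempotents $\{v\}_{v\in E^0}$ and $\{e,e^*\}_{e\in E^1}$ with: $e^*f=0$ for $e\ne f$; $e^*e=r(e)$; $s(e)e=e=er(e)$; $e^*s(e)=e^*=r(e)e^*$; and $v=\sum_{e\in s^{-1}(v)}ee^*$ whenever $s^{-1}(v)$ is finite and nonempty. For $\alpha=e_1\cdots e_n$ put $\alpha^*=e_n^*\cdots e_1^*$. $L_R(E)$ carries the conjugate-linear involution $(\lambda\alpha\beta^* )^*=\overline\lambda\beta\alpha^*$. A projection is an element $p$ with $p=p^2=p^*$. The diagonal is $\mathcal D(L_R(E))=\mathrm{span}_R\{\alpha\alpha^*\mid\alpha\in E^*\}$. *)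

(* Concrete model of the Leavitt path algebra L_R(E):
   formal R-linear combinations of monomials alpha beta^* (pairs of paths),
   multiplied by the Cohn-path-algebra rule, taken modulo the two-sided ideal
   generated by the (CK2) relations v - sum_{s(e)=v} e e^* (and by monomials
   that are not of the form alpha beta^* with alpha, beta paths, r(alpha)=r(beta)). *)
From HB Require Import structures.
From mathcomp Require Import all_boot all_order all_algebra.
Set Implicit Arguments. Unset Strict Implicit. Unset Printing Implicit Defensive.
Import Order.TTheory GRing.Theory Num.Theory.
Local Open Scope ring_scope.

Section Leavitt.
Variables (C : numClosedFieldType) (R : pred C).
Variables (V E : finType) (s r : E -> V).

Definition pth := (V * seq E)%type.

Definition is_pth (p : pth) : bool :=
  match p.2 with
  | [::] => true
  | e :: es => (s e == p.1) && path (fun e f => r e == s f) e es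
  end.

Definition prange (p : pth) : V :=
  if p.2 is e :: es then r (last e es) else p.1.

(* monomial (alpha, beta) stands for alpha beta^* *)
Definition mono := (pth * pth)%type.

Definition good (m : mono) : bool :=
  [&& is_pth m.1, is_pth m.2 & prange m.1 == prange m.2].

(* product (alpha beta^* )(gamma delta^* ) in the Cohn path algebra *)
Definition mmul (m1 m2 : mono) : option mono :=
  let: (a, b) := m1 in let: (g, d) := m2 in
  if (b.1 == g.1) && prefix b.2 g.2 then
    Some ((a.1, a.2 ++ drop (size b.2) g.2), d)
  else if (b.1 == g.1) && prefix g.2 b.2 then
    Some (a, (d.1, d.2 ++ drop (size g.2) b.2))
  else None.

Definition elt := seq (C * mono).

Definition coef (x : elt) (m : mono) : C := \sum_(t <- x | t.2 == m) t.1.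

Definition escale (c : C) (x : elt) : elt := [seq (c * t.1, t.2) | t <- x].

Definition eadd (x y : elt) : elt := x ++ y.

Definition esub (x y : elt) : elt := x ++ escale (-1) y.

Definition tmul (t u : C * mono) : elt :=
  if good t.2 && good u.2 then
    (if mmul t.2 u.2 is Some m then [:: (t.1 * u.1, m)] else [::])
  else [::].

Definition emul (x y : elt) : elt := flatten [seq tmul t u | t <- x, u <- y].

Definition estar (x : elt) : elt := [seq ((t.1)^*, (t.2.2, t.2.1)) | t <- x].

Definition Rcomb (x : elt) : bool := all (fun t => t.1 \in R) x.

Definition ck2 (v : V) : elt :=
  (1, ((v, [::]), (v, [::])))
    :: [seq (-1, ((v, [:: e]), (v, [:: e]))) | e <- enum E & s e == v].

Inductive LI : elt -> Prop :=
| LI_ck2 v : [exists e, s e == v] -> LI (ck2 v)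
| LI_bad c m : ~~ good m -> LI [:: (c, m)]
| LI_add x y : LI x -> LI y -> LI (eadd x y)
| LI_scale c x : c \in R -> LI x -> LI (escale c x)
| LI_lmul a x : Rcomb a -> LI x -> LI (emul a x)
| LI_rmul x a : Rcomb a -> LI x -> LI (emul x a)
| LI_coef x y : coef x =1 coef y -> LI x -> LI y.

(* equality in L_R(E) *)
Definition leq_eq (x y : elt) : Prop := LI (esub x y).

Definition is_projection (p : elt) : Prop :=
  Rcomb p /\ leq_eq (emul p p) p /\ leq_eq (estar p) p.

Definition in_diagonal (p : elt) : Prop :=
  exists d : elt, all (fun t => (t.1 \in R) && (t.2.1 == t.2.2)) d /\ leq_eq p d.

End Leavitt.

Definition eupu (C : numClosedFieldType) (R : pred C) : Prop :=
  forall (n : nat) (l : 'I_n -> C), (forall i, l i \in R) ->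
    \sum_(i < n) `|l i| ^+ 2 = 1 ->
    exists i : 'I_n, forall j : 'I_n, j != i -> l j = 0.

(* L_R(E) acts on the free module over the states (xi, k), xi a boundary path
   and k an integer, by  alpha beta^* . (beta eta, k) = (alpha eta, k + |alpha| - |beta|);
   the relations act trivially because a boundary path at a non-sink vertex starts
   with exactly one of its edges.  For a projection p the coefficients
   c_eta = <p xi, eta> lie in R and p = p^* p gives c_xi = sum_eta |c_eta|^2; feeding
   c_xi, 1 - c_xi and every other c_eta twice into the partition of the unit shows
   p xi = c_xi xi.  Now expand p by (CK2) until every monomial alpha beta^* has
   |beta| = N or beta ending at a sink.  A surviving off-diagonal alpha beta^* with
   |beta| minimal moves xi = beta followed by a fixed boundary path, and no other
   surviving monomial sends xi to the same state, contradicting diagonality.  Hence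
   p is the diagonal part of its expansion. *)

From HB Require Import structures.
From mathcomp Require Import all_boot all_order all_algebra.
From Stdlib Require Import ClassicalEpsilon FunctionalExtensionality.
From mathcomp Require Import ring.
Set Implicit Arguments. Unset Strict Implicit. Unset Printing Implicit Defensive.
Import Order.TTheory GRing.Theory Num.Theory.
Local Open Scope ring_scope.

Section Combinations.
Variables (C : numClosedFieldType) (V E : finType).
Implicit Types (x y : elt C V E) (F : mono V E -> C).

Definition wsum x F : C := \sum_(t <- x) t.1 * F t.2.

Lemma wsum_nil F : wsum [::] F = 0.
Proof. by rewrite /wsum big_nil. Qed.

Lemma wsum_cons t x F : wsum (t :: x) F = t.1 * F t.2 + wsum x F.
Proof. by rewrite /wsum big_cons. Qed.

Lemma wsum_cat x y F : wsum (x ++ y) F = wsum x F + wsum y F.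
Proof. by rewrite /wsum big_cat. Qed.

Lemma wsum_escale c x F : wsum (escale c x) F = c * wsum x F.
Proof. by rewrite /wsum big_map mulr_sumr; apply: eq_bigr => t _; rewrite mulrA. Qed.

Lemma wsum_eq0 x F : {in x, forall t, F t.2 = 0} -> wsum x F = 0.
Proof. by move=> F0; rewrite /wsum big1_seq // => t /andP[_ /F0 ->]; rewrite mulr0. Qed.

Lemma wsum_coef x F (ms : seq (mono V E)) : uniq ms -> {subset map snd x <= ms} ->
  wsum x F = \sum_(m <- ms) coef x m * F m.
Proof.
move=> ms_uniq xms; rewrite /wsum /coef.
under [RHS]eq_bigr => m _ do rewrite mulr_suml big_mkcond /=.
rewrite exchange_big /=; apply: eq_big_seq => t tx.
rewrite (bigD1_seq t.2) ?xms ?map_f //= eqxx big1 ?addr0 // => m /negPf.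
by rewrite eq_sym => ->.
Qed.

Lemma eq_wsum_coef x y F : coef x =1 coef y -> wsum x F = wsum y F.
Proof.
move=> exy; set ms := undup (map snd (x ++ y)).
have ms_uniq : uniq ms by apply: undup_uniq.
rewrite (@wsum_coef x F ms) // => [|m mx]; last by rewrite mem_undup map_cat mem_cat mx.
rewrite (@wsum_coef y F ms) // => [|m my]; last by rewrite mem_undup map_cat mem_cat my orbT.
by apply: eq_bigr => m _; rewrite exy.
Qed.

Lemma coef_nil m : coef ([::] : elt C V E) m = 0.
Proof. by rewrite /coef big_nil. Qed.

Lemma coef_cat x y m : coef (x ++ y) m = coef x m + coef y m.
Proof. by rewrite /coef big_cat. Qed.

Lemma coef_escale c x m : coef (escale c x) m = c * coef x m.
Proof. by rewrite /coef big_map mulr_sumr. Qed.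

Lemma coef_esub x y m : coef (esub x y) m = coef x m - coef y m.
Proof. by rewrite /esub coef_cat coef_escale mulN1r. Qed.

Lemma coef_filter (P : pred (mono V E)) x m :
  coef [seq t <- x | P t.2] m = if P m then coef x m else 0.
Proof.
rewrite /coef big_filter_cond; case: ifP => Pm.
  by apply: eq_bigl => t; case: eqP => [->|]; rewrite ?Pm ?andbF.
by rewrite big_pred0 // => t; case: eqP => [->|]; rewrite ?Pm ?andbF.
Qed.

Lemma coef_neq0_mem x m : coef x m != 0 -> m \in map snd x.
Proof.
apply: contraR => mx; rewrite /coef big1_seq // => t /andP[/eqP tm tx].
by case/negP: mx; rewrite -tm map_f.
Qed.

End Combinations.

(* Possibly infinite edge sequences; [None] marks the end of a finite one. *)
Definition stream (E : Type) := nat -> option E.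

Definition stream_eqb E (f g : stream E) : bool :=
  if excluded_middle_informative (f = g) then true else false.

Lemma stream_eqP E : Equality.axiom (@stream_eqb E).
Proof. by move=> f g; rewrite /stream_eqb; case: excluded_middle_informative; constructor. Qed.

HB.instance Definition _ E := hasDecEq.Build (stream E) (@stream_eqP E).

Section Streams.
Variable E : eqType.
Implicit Types (f g : stream E) (l : seq E).
Local Open Scope nat_scope.

Fixpoint scat l f : stream E :=
  if l is e :: l' then fun i => if i is i'.+1 then scat l' f i' else Some e else f.

Definition sdrop n f : stream E := fun i => f (i + n).

Fixpoint sprefix l f : bool :=
  if l is e :: l' then (f 0 == Some e) && sprefix l' (sdrop 1 f) else true.

Lemma scat_cat l1 l2 f : scat (l1 ++ l2) f = scat l1 (scat l2 f).
Proof. by elim: l1 => //= e l1 ->. Qed.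

Lemma sdrop0 f : sdrop 0 f = f.
Proof. by apply: functional_extensionality => i; rewrite /sdrop addn0. Qed.

Lemma sdropD n m f : sdrop n (sdrop m f) = sdrop (m + n) f.
Proof. by apply: functional_extensionality => i; rewrite /sdrop -addnA (addnC n). Qed.

Lemma sdrop1_scons e l f : sdrop 1 (scat (e :: l) f) = scat l f.
Proof. by apply: functional_extensionality => i; rewrite /sdrop addn1. Qed.

Lemma sdrop_scat l f : sdrop (size l) (scat l f) = f.
Proof.
elim: l => [|e l IH]; first exact: sdrop0.
by rewrite [size _]/= -add1n -sdropD sdrop1_scons.
Qed.

Lemma sprefix_scat l f : sprefix l (scat l f).
Proof. by elim: l => //= e l IH; rewrite eqxx sdrop1_scons IH. Qed.

Lemma sprefixP l f : sprefix l f -> f = scat l (sdrop (size l) f).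
Proof.
elim: l f => [|e l IH] f /=; first by rewrite sdrop0.
move=> /andP[/eqP f0 /IH fl]; apply: functional_extensionality => -[|i] //=.
by move: fl; rewrite sdropD add1n => <-; rewrite /sdrop addn1.
Qed.

Lemma sprefix_cat l1 l2 f :
  sprefix (l1 ++ l2) f = sprefix l1 f && sprefix l2 (sdrop (size l1) f).
Proof.
elim: l1 f => [|e l1 IH] f /=; first by rewrite sdrop0.
by rewrite IH sdropD add1n andbA.
Qed.

Lemma sprefix_scat_prefix l1 l2 f :
  sprefix l1 (scat l2 f) -> prefix l1 l2 || prefix l2 l1.
Proof.
elim: l1 l2 => [|e l1 IH] [|e' l2] //=.
by rewrite sdrop1_scons => /andP[/eqP [->] /IH]; rewrite eqxx.
Qed.

Lemma scat_inj l1 l2 f g : size l1 = size l2 -> scat l1 f = scat l2 g -> l1 = l2.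
Proof.
elim: l1 l2 => [|e l1 IH] [|e' l2] //= [sz] fg.
have [->] : Some e = Some e' := congr1 (fun h => h 0) fg.
congr cons; apply: IH => //; apply: functional_extensionality => i.
exact: (congr1 (fun h => h i.+1) fg).
Qed.

End Streams.

Section PartitionOfUnit.
Variables (C : numClosedFieldType) (R : pred C).
Hypothesis R_subring : subring_closed R.
Hypothesis R_eupu : eupu R.

HB.instance Definition _ := GRing.isSubringClosed.Build C R R_subring.

Lemma eupu_seq (L : seq C) : {subset L <= R} -> \sum_(x <- L) `|x| ^+ 2 = 1 ->
  exists i, forall j, (j < size L)%N -> j != i -> nth 0 L j = 0.
Proof.
move=> LR L1.
have L1' : \sum_(i < size L) `|nth 0 L i| ^+ 2 = 1.
  by rewrite -(big_mkord xpredT (fun i => `|nth 0 L i| ^+ 2)) -(big_nth 0 xpredT (fun x => `|x| ^+ 2)).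
have [i Li] := R_eupu (fun i : 'I_(size L) => LR _ (mem_nth 0 (ltn_ord i))) L1'.
exists (val i) => j jL ji; apply: (Li (Ordinal jL)).
by apply: contra ji => /eqP <-.
Qed.

(* Apply the partition of the unit to [cs ++ cs ++ [:: a; 1 - a]], each entry of [cs]
   occurring twice. *)
Lemma eupu_sq_fixed (a : C) (cs : seq C) : a \in R -> {subset cs <= R} ->
  a = `|a| ^+ 2 + \sum_(c <- cs) `|c| ^+ 2 -> {in cs, forall c, c = 0}.
Proof.
move=> aR csR ea.
have a_ge0 : 0 <= a by rewrite ea addr_ge0 ?sumr_ge0 // => *; rewrite exprn_ge0.
have na : `|a| ^+ 2 = a ^+ 2 by rewrite normCK geC0_conj // expr2.
have n1a : `|1 - a| ^+ 2 = (1 - a) ^+ 2.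
  by rewrite normCK conj_Creal ?expr2 // rpredB ?real1 ?ger0_real.
pose L := cs ++ cs ++ [:: a; 1 - a].
have LR : {subset L <= R}.
  move=> x; rewrite !mem_cat !inE => /or4P[/csR | /csR | /eqP -> | /eqP ->] //.
  by rewrite rpredB ?rpred1.
have L1 : \sum_(x <- L) `|x| ^+ 2 = 1.
  rewrite /L !big_cat /= !big_cons big_nil addr0 na n1a.
  have -> : \sum_(c <- cs) `|c| ^+ 2 = a - a ^+ 2 by rewrite {1}ea na addrAC subrr add0r.
  ring.
have [i Li] := eupu_seq LR L1.
move=> c ccs; pose j := index c cs.
have jcs : (j < size cs)%N by rewrite index_mem.
have sL : size L = (size cs + (size cs + 2))%N by rewrite !size_cat.
have ej : nth 0 L j = c by rewrite nth_cat jcs nth_index.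
have ej' : nth 0 L (size cs + j) = c.
  by rewrite nth_cat ltnNge leq_addr /= addKn nth_cat jcs nth_index.
have [ji | ji] := eqVneq j i; last by rewrite -ej Li // sL ltn_addr.
rewrite -ej' Li // ?sL ?ltn_add2l ?ltn_addr // -ji -{2}(add0n j) eqn_add2r.
by rewrite -lt0n (leq_ltn_trans _ jcs).
Qed.

End PartitionOfUnit.

Section Representation.
Variables (C : numClosedFieldType) (R : pred C).
Variables (V E : finType) (s r : E -> V).

Local Notation pth := (pth V E).
Local Notation mono := (mono V E).
Local Notation elt := (elt C V E).
Local Notation is_pth := (is_pth s r).
Local Notation prange := (prange r).
Local Notation good := (good s r).
Local Notation emul := (emul s r).
Local Notation tmul := (tmul s r).
Local Notation LI := (LI R s r).

Lemma is_pth_cons w e l : is_pth (w, e :: l) = (s e == w) && is_pth (r e, l).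
Proof. by case: l => [|e' l]; rewrite /is_pth //= (eq_sym (r e)). Qed.

Lemma prange_cons w e l : prange (w, e :: l) = prange (r e, l).
Proof. by case: l. Qed.

Lemma is_pth_cat v l1 l2 :
  is_pth (v, l1 ++ l2) = is_pth (v, l1) && is_pth (prange (v, l1), l2).
Proof.
elim: l1 v => [|e l1 IH] v //=.
by rewrite -cat_cons !is_pth_cons IH prange_cons andbA.
Qed.

Lemma prange_cat v l1 l2 : prange (v, l1 ++ l2) = prange (prange (v, l1), l2).
Proof. by elim: l1 v => [|e l1 IH] v //=; rewrite -cat_cons !prange_cons IH. Qed.

Lemma good_swap (m : mono) : good (m.2, m.1) = good m.
Proof. by rewrite /good /= andbCA eq_sym. Qed.

Lemma mmul_good m1 m2 m : good m1 -> good m2 -> mmul m1 m2 = Some m -> good m.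
Proof.
case: m1 => [[a1 a2] [b1 b2]]; case: m2 => [[g1 g2] [d1 d2]]; rewrite /good /mmul /=.
move=> /and3P[pa pb /eqP eab] /and3P[pg pd /eqP egd].
case: ifP => [/andP[/eqP eb /prefixP[rest eg]] | _].
  move=> [<-] /=; subst g2 b1; rewrite drop_size_cat //.
  rewrite is_pth_cat in pg; case/andP: pg => _ pr.
  by rewrite is_pth_cat pa pd eab pr /= prange_cat eab -egd prange_cat.
case: ifP => // /andP[/eqP eb /prefixP[rest eb2]].
move=> [<-] /=; subst b2 b1; rewrite drop_size_cat //.
rewrite is_pth_cat in pb; case/andP: pb => _ pr.
by rewrite is_pth_cat pa pd -egd pr /= prange_cat eab prange_cat egd.
Qed.

Definition sink (w : V) : bool := [forall e, s e != w].

Fixpoint vertex_at (v : V) (f : stream E) (n : nat) : V :=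
  if n is n'.+1 then (if f n' is Some e then r e else vertex_at v f n') else v.

Definition continues_at (w : V) (o : option E) : bool :=
  if o is Some e then s e == w else sink w.

(* A boundary path: an infinite path, or a finite path ending at a sink. *)
Definition boundary (b : V * stream E) : Prop :=
  forall n, continues_at (vertex_at b.1 b.2 n) (b.2 n).

Lemma vertex_at_tail v f e n :
  f 0%N = Some e -> vertex_at v f n.+1 = vertex_at (r e) (sdrop 1 f) n.
Proof.
move=> f0; elim: n => [|n IH] /=; first by rewrite f0.
by rewrite -IH /sdrop addn1.
Qed.

Lemma boundary_tail v f e :
  boundary (v, f) -> f 0%N = Some e -> boundary (r e, sdrop 1 f).
Proof.
move=> bf f0 n; have := bf n.+1.
by rewrite [vertex_at _ _ _](vertex_at_tail _ _ f0) /= /sdrop addn1.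
Qed.

Lemma boundary_cons v f e :
  f 0%N = Some e -> s e = v -> boundary (r e, sdrop 1 f) -> boundary (v, f).
Proof.
move=> f0 se bf [|n]; first by rewrite /= f0 /= se.
rewrite /= -/(vertex_at v f n.+1) (vertex_at_tail _ _ f0).
by have := bf n; rewrite /= /sdrop addn1.
Qed.

Lemma boundary_sdrop v f l :
  boundary (v, f) -> sprefix l f -> boundary (prange (v, l), sdrop (size l) f).
Proof.
elim: l v f => [|e l IH] v f /=; first by rewrite sdrop0.
move=> bf /andP[/eqP f0 lf].
by move: (IH _ _ (boundary_tail bf f0) lf); rewrite prange_cons sdropD add1n.
Qed.

Lemma boundary_scat w l g :
  is_pth (w, l) -> boundary (prange (w, l), g) -> boundary (w, scat l g).
Proof.
elim: l w => [|e l IH] w //=; rewrite is_pth_cons prange_cons => /andP[/eqP se pl] bg.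
by apply: (@boundary_cons _ _ e) => //; rewrite sdrop1_scons; apply: IH.
Qed.

Definition next_edge (w : V) : option E := [pick e | s e == w].

Fixpoint canon_vertex (w : V) (n : nat) : V :=
  if n is n'.+1 then
    (if next_edge (canon_vertex w n') is Some e then r e else canon_vertex w n')
  else w.

Definition canon_boundary (w : V) : stream E := fun n => next_edge (canon_vertex w n).

Lemma boundary_canon w : boundary (w, canon_boundary w).
Proof.
have vw n : vertex_at w (canon_boundary w) n = canon_vertex w n by elim: n => //= n ->.
move=> n; rewrite /continues_at /= vw /canon_boundary /next_edge.
by case: pickP => [e /eqP -> | none] //; apply/forallP => e; rewrite none.
Qed.

(* Without the degree, a loop [e] at [v] would act on [e e e ...] as [v] does. *)
Definition state := ((V * stream E) * int)%type.

Definition act (m : mono) (b : state) : option state :=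
  if (m.2.1 == b.1.1) && sprefix m.2.2 b.1.2 then
    Some ((m.1.1, scat m.1.2 (sdrop (size m.2.2) b.1.2)),
          b.2 + (size m.1.2)%:Z - (size m.2.2)%:Z)
  else None.

Lemma act_mmul m1 m2 b :
  (if mmul m1 m2 is Some m then act m b else None) = obind (act m1) (act m2 b).
Proof.
case: m1 => [[a1 a2] [b1 b2]]; case: m2 => [[g1 g2] [d1 d2]]; case: b => [[v f] k].
rewrite /mmul /act /=.
case: ifP => [/andP[/eqP eb /prefixP[rest ->]] | nbg].
  rewrite drop_size_cat //; case: ifP => //= _.
  rewrite eb eqxx /= !scat_cat sprefix_scat sdrop_scat.
  by congr (Some (_, _)); rewrite !size_cat !PoszD; ring.
case: ifP => [/andP[/eqP eb /prefixP[rest ->]] | ngb].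
  rewrite drop_size_cat // sprefix_cat.
  case: (d1 == v) => //=; case: (sprefix d2 f) => //=.
  rewrite eb eqxx /= sprefix_cat sprefix_scat sdrop_scat /=.
  case: (sprefix rest _) => //=.
  rewrite !size_cat -[sdrop (size g2 + _) _]sdropD sdrop_scat sdropD.
  by congr (Some (_, _)); rewrite !PoszD; ring.
case: ifP => //= _; case: ifP => //= /andP[/eqP eb /sprefix_scat_prefix].
by move: nbg ngb; rewrite eb eqxx /= => -> ->.
Qed.

Lemma act_boundary m b b' : good m -> boundary b.1 -> act m b = Some b' -> boundary b'.1.
Proof.
case: m => [[a1 a2] [e1 e2]]; case: b => [[v f] k].
rewrite /good /act /= => /and3P[pa pe /eqP eae] bf.
case: ifP => // /andP[/eqP ev ef] [<-] /=.
by apply: boundary_scat => //; rewrite eae ev; apply: boundary_sdrop.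
Qed.

Lemma act_swap m b b' : act (m.2, m.1) b = Some b' -> act m b' = Some b.
Proof.
case: m => [[a1 a2] [e1 e2]]; case: b => [[v f] k].
rewrite /act /=; case: ifP => // /andP[/eqP av af] [<-] /=.
rewrite eqxx sprefix_scat sdrop_scat /= -(sprefixP af) av.
by congr (Some (_, _)); ring.
Qed.

Lemma act_swapE m b b' : (act (m.2, m.1) b == Some b') = (act m b' == Some b).
Proof.
apply/eqP/eqP; first exact: act_swap.
by case: m => a e; apply: (@act_swap (e, a) b' b).
Qed.

(* The coefficient of [b'] in [x . b]. *)
Definition mxcoef (x : elt) (b b' : state) : C :=
  wsum x (fun m => (good m && (act m b == Some b'))%:R).

Definition act_image (y : elt) (b : state) : seq state :=
  undup (pmap (fun u : C * mono => if good u.2 then act u.2 b else None) y).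

Lemma mxcoef_cat x y b b' : mxcoef (x ++ y) b b' = mxcoef x b b' + mxcoef y b b'.
Proof. exact: wsum_cat. Qed.

Lemma mxcoef_escale c x b b' : mxcoef (escale c x) b b' = c * mxcoef x b b'.
Proof. exact: wsum_escale. Qed.

Lemma mxcoef_esub x y b b' : mxcoef (esub x y) b b' = mxcoef x b b' - mxcoef y b b'.
Proof. by rewrite /esub mxcoef_cat mxcoef_escale mulN1r. Qed.

Lemma mxcoef_estar x b b' : mxcoef (estar x) b b' = (mxcoef x b' b)^*.
Proof.
rewrite /mxcoef /wsum /estar big_map rmorph_sum; apply: eq_bigr => t _ /=.
by rewrite rmorphM /= rmorph_nat -(good_swap t.2) act_swapE.
Qed.

Lemma mxcoef_tmul (t u : C * mono) b b'' :
  mxcoef (tmul t u) b b'' =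
  t.1 * u.1 * (good t.2 && good u.2 && (obind (act t.2) (act u.2 b) == Some b''))%:R.
Proof.
rewrite /mxcoef /tmul; case gt: (good t.2); case gu: (good u.2) => /=;
  rewrite ?wsum_nil ?mulr0 //.
have := act_mmul t.2 u.2 b; case em: (mmul t.2 u.2) => [m|] <-.
  by rewrite wsum_cons wsum_nil addr0 /= (mmul_good gt gu em).
by rewrite wsum_nil mulr0.
Qed.

Lemma sum_act_image y b (u : C * mono) (G : state -> C) : u \in y ->
  \sum_(b' <- act_image y b) ((good u.2 && (act u.2 b == Some b'))%:R * G b') =
  if good u.2 then (if act u.2 b is Some b0 then G b0 else 0) else 0.
Proof.
move=> uy; case gu: (good u.2) => /=; last by rewrite big1 // => i _; rewrite mul0r.
case ea: (act u.2 b) => [b0|]; last by rewrite big1 // => i _; rewrite mul0r.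
have b0y : b0 \in act_image y b.
  by rewrite mem_undup mem_pmap; apply/mapP; exists u => //; rewrite gu ea.
rewrite (bigD1_seq b0) ?undup_uniq //= eqxx mul1r big1 ?addr0 // => i ib0.
by rewrite (_ : (Some b0 == Some i) = false) ?mul0r //; apply/eqP => -[ei]; rewrite ei eqxx in ib0.
Qed.

Lemma mxcoef_emul x y b b'' :
  mxcoef (emul x y) b b'' = \sum_(b' <- act_image y b) mxcoef y b b' * mxcoef x b' b''.
Proof.
have -> : mxcoef (emul x y) b b'' = \sum_(t <- x) \sum_(u <- y) mxcoef (tmul t u) b b''.
  by rewrite {1}/mxcoef /emul /wsum big_flatten /= big_allpairs_dep.
under eq_bigr => t _ do under eq_bigr => u _ do rewrite mxcoef_tmul.
rewrite exchange_big /=.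
under [RHS]eq_bigr => b' _ do rewrite {1}/mxcoef /wsum mulr_suml.
rewrite [RHS]exchange_big /=; apply: eq_big_seq => u uy.
under [RHS]eq_bigr => b' _ do rewrite -mulrA.
rewrite -[RHS]mulr_sumr sum_act_image //.
case gu: (good u.2); last by rewrite mulr0 big1 // => t _; rewrite andbF mulr0.
case ea: (act u.2 b) => [b0|] /=; last by rewrite mulr0 big1 // => t _; rewrite andbF mulr0.
rewrite /mxcoef /wsum mulr_sumr; apply: eq_bigr => t _; rewrite andbT; ring.
Qed.

Lemma act_image_boundary y b b' : boundary b.1 -> b' \in act_image y b -> boundary b'.1.
Proof.
move=> bb; rewrite mem_undup mem_pmap => /mapP[u _].
by case gu: (good u.2) => // /esym; apply: act_boundary.
Qed.

Lemma mxcoef_ck2 v b b' :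
  [exists e, s e == v] -> boundary b.1 -> mxcoef (ck2 C s v) b b' = 0.
Proof.
case: b => [[w f] k] /= ev bf; rewrite /mxcoef /ck2 wsum_cons.
have gv : good ((v, [::]), (v, [::])) by rewrite /good /= eqxx.
have ge e : s e == v -> good ((v, [:: e]), (v, [:: e])).
  by move=> se; rewrite /good /is_pth /= se eqxx.
rewrite gv /= /act /= andbT sdrop0 addr0 subr0.
have [vw | nvw] := eqVneq v w; last first.
  rewrite /= mulr0 add0r wsum_eq0 // => t /mapP[e _ ->] /=.
  by rewrite /act /= (negbTE nvw) andbF.
subst w => /=; have := bf 0%N; rewrite /= /continues_at.
case f0: (f 0%N) => [e0|] /=; last first.
  by move=> /forallP sk; case/existsP: ev => e1; rewrite (negbTE (sk e1)).
move=> /eqP se0; rewrite /wsum big_map big_filter big_mkcond /=.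
rewrite (bigD1_seq e0) ?mem_enum ?enum_uniq //= se0 eqxx ge ?se0 // f0 eqxx /=.
have -> : (fun i => if i is i'.+1 then sdrop 1 f i' else Some e0) = f.
  by apply: functional_extensionality => -[|i] //; rewrite /sdrop addn1.
rewrite addrK big1 ?addr0; first by rewrite mulN1r mul1r subrr.
move=> e ne; case: ifP => // se; rewrite ge //.
by rewrite (_ : (Some e0 == Some e) = false) ?mulr0 //; apply/eqP => -[ee]; rewrite ee eqxx in ne.
Qed.

Lemma mxcoef_LI x : LI x -> forall b, boundary b.1 -> forall b', mxcoef x b b' = 0.
Proof.
elim=> {x} [v ev | c m bm | x y _ IHx _ IHy | c x _ _ IH | a x _ _ IH | x a _ _ IH
  | x y exy _ IH] b bb b'.
- exact: mxcoef_ck2.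
- by rewrite /mxcoef wsum_cons wsum_nil (negbTE bm) /= mulr0 addr0.
- by rewrite /eadd mxcoef_cat IHx // IHy // addr0.
- by rewrite mxcoef_escale IH // mulr0.
- by rewrite mxcoef_emul big1 // => b'' _; rewrite IH // mul0r.
- rewrite mxcoef_emul big1_seq // => b'' /andP[_ b''x].
  by rewrite IH ?mulr0 //; apply: act_image_boundary b''x.
- by have := IH b bb b'; rewrite /mxcoef (eq_wsum_coef _ exy).
Qed.

Lemma mxcoef_leq_eq x y : leq_eq R s r x y ->
  forall b, boundary b.1 -> forall b', mxcoef x b b' = mxcoef y b b'.
Proof.
by move=> exy b bb b'; apply/eqP; rewrite -subr_eq0 -mxcoef_esub (mxcoef_LI exy).
Qed.

Hypothesis R_subring : subring_closed R.

HB.instance Definition _ := GRing.isSubringClosed.Build C R R_subring.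

Lemma mxcoef_R x b b' : Rcomb R x -> mxcoef x b b' \in R.
Proof.
move=> /allP xR; rewrite /mxcoef /wsum big_seq.
by apply: rpred_sum => t /xR tR; rewrite rpredM ?rpred_nat.
Qed.

Section Expansion.
(* Not derivable from the constructors of [LI] alone: for the empty graph no
   generating relation exists. *)
Hypothesis LI_nil : LI [::].

Lemma LI_refl x : LI (esub x x).
Proof. by apply: (LI_coef _ LI_nil) => m; rewrite coef_esub subrr coef_nil. Qed.

Lemma LI_trans x y z : LI (esub x y) -> LI (esub y z) -> LI (esub x z).
Proof.
move=> exy eyz; apply: (LI_coef _ (LI_add exy eyz)) => m.
by rewrite /eadd coef_cat !coef_esub subrKA.
Qed.

Lemma LI_esub_cat x1 y1 x2 y2 :
  LI (esub x1 y1) -> LI (esub x2 y2) -> LI (esub (x1 ++ x2) (y1 ++ y2)).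
Proof.
move=> e1 e2; apply: (LI_coef _ (LI_add e1 e2)) => m.
by rewrite /eadd coef_cat !coef_esub !coef_cat; ring.
Qed.

Lemma LI_esub_flatten (x : elt) (F : C * mono -> elt) :
  {in x, forall t, LI (esub [:: t] (F t))} -> LI (esub x (flatten (map F x))).
Proof.
elim: x => [|t x IH] eF /=; first exact: LI_nil.
rewrite -cat1s; apply: LI_esub_cat; first by apply: eF; rewrite mem_head.
by apply: IH => t' t'x; apply: eF; rewrite in_cons t'x orbT.
Qed.

Definition extend (m : mono) (e : E) : mono :=
  ((m.1.1, m.1.2 ++ [:: e]), (m.2.1, m.2.2 ++ [:: e])).

Lemma good_extend m e : good m -> s e == prange m.2 -> good (extend m e).
Proof.
case: m => [[a1 a2] [b1 b2]]; rewrite /good /extend /= => /and3P[pa pb /eqP ab] se.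
by rewrite !is_pth_cat pa pb ab /= !prange_cat ab eqxx andbT /is_pth /= se.
Qed.

Lemma emul_ck2 (l : C) (m : mono) : good m ->
  let w := prange m.2 in
  emul [:: (l, (m.1, (w, [::])))] (emul (ck2 C s w) [:: (1, ((w, [::]), m.2))]) =
  (l * (1 * 1), m) :: [seq (l * (-1 * 1), extend m e) | e <- enum E & s e == w].
Proof.
case: m => [[a1 a2] [b1 b2]]; rewrite /good /= => /and3P[pa pb /eqP ab].
rewrite /emul allpairs1r /ck2 /=; set w := prange (b1, b2).
have -> : tmul ((1 : C), ((w, [::]), (w, [::]))) ((1 : C), ((w, [::]), (b1, b2))) =
    [:: (1 * 1, ((w, [::]), (b1, b2)))] by rewrite /tmul /good /= pb !eqxx.
have -> : flatten [seq tmul t ((1 : C), ((w, [::]), (b1, b2))) |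
      t <- [seq ((-1 : C), ((w, [:: e]), (w, [:: e]))) | e <- enum E & s e == w]] =
    [seq (-1 * 1, ((w, [:: e]), (b1, b2 ++ [:: e]))) | e <- enum E & s e == w].
  rewrite -map_comp -[RHS]flatten_map1; congr flatten.
  apply/eq_in_map => e; rewrite mem_filter => /andP[se _].
  by rewrite /tmul /good /= pb !eqxx /= /is_pth /= se.
rewrite cats0 /= -map_comp.
have -> : tmul (l, ((a1, a2), (w, [::]))) (1 * 1, ((w, [::]), (b1, b2))) =
    [:: (l * (1 * 1), ((a1, a2), (b1, b2)))].
  by rewrite /tmul /good /= pa pb ab !eqxx /= cats0.
rewrite /=; congr (_ :: _); rewrite -[RHS]flatten_map1; congr flatten.
apply/eq_in_map => e; rewrite mem_filter => /andP[se _] /=.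
by rewrite /tmul /good /= pa ab !eqxx /= is_pth_cat pb prange_cat /= /is_pth /= se /w eqxx.
Qed.

Lemma LI_expand_step (l : C) (m : mono) : l \in R -> good m -> ~~ sink (prange m.2) ->
  LI (esub [:: (l, m)] [seq (l, extend m e) | e <- enum E & s e == prange m.2]).
Proof.
move=> lR gm nsk; have ev : [exists e, s e == prange m.2].
  by move: nsk; rewrite /sink negb_forall => /existsP[e]; rewrite negbK => se; apply/existsP; exists e.
have lR' : Rcomb R [:: (l, (m.1, (prange m.2, [::])))] by rewrite /Rcomb /= lR.
have R1 : Rcomb R [:: (1, ((prange m.2, [::]), m.2))].
  by rewrite /Rcomb /= rpred1.
have := LI_lmul lR' (LI_rmul R1 (LI_ck2 R r ev)); rewrite emul_ck2 // => eLI.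
apply: (LI_coef _ eLI) => m'; congr coef.
rewrite /esub /escale -map_comp !mulr1 mulrN1 /=; congr cons.
by apply/eq_map => e /=; rewrite mulN1r.
Qed.

Fixpoint expand (n : nat) (t : C * mono) : elt :=
  if n is n'.+1 then
    (if good t.2 && ~~ sink (prange t.2.2) then
       flatten [seq expand n' (t.1, extend t.2 e) | e <- enum E & s e == prange t.2.2]
     else [:: t])
  else [:: t].

Lemma LI_expand n t : t.1 \in R -> LI (esub [:: t] (expand n t)).
Proof.
elim: n t => [|n IH] [l m] /= lR; first exact: LI_refl.
case: ifP => [/andP[gm nsk] | _]; last exact: LI_refl.
apply: LI_trans (LI_expand_step lR gm nsk) _.
rewrite (_ : flatten _ = flatten (map (expand n) [seq (l, extend m e) | e <- enum E & s e == prange m.2]));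
  last by rewrite -map_comp.
by apply: LI_esub_flatten => _ /mapP[e _ ->]; apply: IH.
Qed.

Lemma expand_scalar n t : all (fun t' => t'.1 == t.1) (expand n t).
Proof.
elim: n t => [|n IH] t /=; first by rewrite eqxx.
case: ifP => _; last by rewrite /= eqxx.
apply/allP => t' /flattenP[_ /mapP[e _ ->] t'e].
by have /eqP -> := allP (IH _) _ t'e.
Qed.

Lemma expand_nongood n t : ~~ good t.2 -> expand n t = [:: t].
Proof. by case: n => //= n /negbTE ->. Qed.

Definition expanded (N : nat) (m : mono) : bool :=
  (size m.2.2 <= N)%N && ((size m.2.2 < N)%N ==> sink (prange m.2)).

Lemma expand_expanded n t : good t.2 ->
  {in expand n t, forall t', good t'.2 -> expanded (size t.2.2.2 + n) t'.2}.
Proof.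
rewrite /expanded; elim: n t => [|n IH] t gt t' /=.
  by rewrite inE => /eqP -> _; rewrite addn0 leqnn ltnn.
case: ifP => [/andP[_ nsk] | nsk].
  move=> /flattenP[_ /mapP[e] + -> t'e]; rewrite mem_filter => /andP[se _] gt'.
  have := IH (t.1, extend t.2 e) (good_extend gt se) t' t'e gt'.
  by rewrite /= size_cat addn1 addSnnS.
rewrite inE => /eqP -> _; rewrite gt /= in nsk; move/negbFE: nsk => ->.
by rewrite leq_addr implybT.
Qed.

End Expansion.

Lemma expanded_cmp N m0 m : expanded N m0 -> expanded N m ->
  (size m.2.2 <= size m0.2.2)%N || sink (prange m0.2).
Proof.
rewrite /expanded => /andP[_ sk0] /andP[le _].
by case: ltnP sk0 => [_ /= -> | /(leq_trans le) ->]; rewrite ?orbT.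
Qed.

Definition canon_state (b : pth) : state := ((b.1, scat b.2 (canon_boundary (prange b))), 0).

Lemma boundary_canon_state b : is_pth b -> boundary (canon_state b).1.
Proof. by case: b => v l pb; apply: boundary_scat pb (boundary_canon _). Qed.

Lemma act_canon_state (m : mono) : act m (canon_state m.2) =
  Some ((m.1.1, scat m.1.2 (canon_boundary (prange m.2))), (size m.1.2)%:Z - (size m.2.2)%:Z).
Proof. by rewrite /act /= eqxx sprefix_scat sdrop_scat add0r. Qed.

Lemma act_canon_state_neq (m : mono) : m.1 != m.2 ->
  act m (canon_state m.2) != Some (canon_state m.2).
Proof.
case: m => [[a1 a2] [b1 b2]] /= ne; rewrite act_canon_state; apply/eqP => -[ea eab].
move/eqP; rewrite subr_eq0 eqz_nat => /eqP /scat_inj /(_ eab) e2.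
by rewrite ea e2 eqxx in ne.
Qed.

Lemma act_canon_state_inv (m0 m : mono) : m0.1 != m0.2 ->
  (size m.2.2 <= size m0.2.2)%N || sink (prange m0.2) ->
  act m (canon_state m0.2) = act m0 (canon_state m0.2) ->
  m = m0 \/ (size m.2.2 < size m0.2.2)%N && (m.1 != m.2).
Proof.
case: m0 m => [[a1 a2] [b1 b2]] [[c1 c2] [d1 d2]] /= ne short.
rewrite act_canon_state /act /=; case: ifP => // /andP[/eqP db sp] [ca ecat esz].
set eps := canon_boundary _ in ecat sp.
have [/prefixP[rho eb2] | npre] := boolP (prefix d2 b2).
  move: ecat; rewrite eb2 scat_cat sdrop_scat -scat_cat => /scat_inj ecat.
  have {ecat} ea2 : c2 ++ rho = a2.
    apply: ecat; apply/eqP; rewrite -eqz_nat -subr_eq0 size_cat PoszD; apply/eqP.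
    have -> : (size a2)%:Z = 0 + (size c2)%:Z - (size d2)%:Z + (size b2)%:Z by rewrite esz subrK.
    by rewrite eb2 size_cat PoszD; ring.
  case: rho eb2 ea2 => [|e rho] eb2 ea2.
    by left; rewrite -ea2 !cats0 ca db.
  right; rewrite size_cat addnS ltnS leq_addr /=.
  by apply: contra ne => /eqP [c1d1 c2d2]; rewrite -ea2 eb2 -ca -db c1d1 c2d2.
have /prefixP[[|e rho] ed2] : prefix b2 d2.
  by move: (sprefix_scat_prefix sp); rewrite (negbTE npre).
- by rewrite ed2 cats0 prefix_refl in npre.
move: sp short; rewrite ed2 sprefix_cat sprefix_scat sdrop_scat /= => /andP[/eqP eps0 _].
have se : s e == prange (b1, b2) by have := boundary_canon (prange (b1, b2)) 0%N; rewrite /= -/eps eps0.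
have -> : sink (prange (b1, b2)) = false.
  by apply/negbTE; rewrite /sink negb_forall; apply/existsP; exists e; rewrite negbK.
by rewrite orbF size_cat /= addnS ltnNge leq_addr.
Qed.
Hypothesis R_eupu : eupu R.

Variable p : elt.
Hypothesis p_R : Rcomb R p.
Hypothesis p_idem : leq_eq R s r (emul p p) p.
Hypothesis p_selfadj : leq_eq R s r (estar p) p.

Lemma mxcoef_projection xi : boundary xi.1 ->
  mxcoef p xi xi = \sum_(b <- act_image p xi) `|mxcoef p xi b| ^+ 2.
Proof.
move=> bxi; rewrite -(mxcoef_leq_eq p_idem) // mxcoef_emul.
apply: eq_big_seq => b bp; rewrite normCK; congr (_ * _).
by rewrite -(mxcoef_leq_eq p_selfadj (act_image_boundary bxi bp)) mxcoef_estar.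
Qed.

Lemma mxcoef_projection_diag xi b : boundary xi.1 -> b != xi -> mxcoef p xi b = 0.
Proof.
move=> bxi bxi'; pose c b := mxcoef p xi b.
have c_out b' : b' \notin act_image p xi -> c b' = 0.
  move=> b'p; apply: wsum_eq0 => t tp.
  case gt: (good t.2) => //=; case: eqP => // et.
  by case/negP: b'p; rewrite mem_undup mem_pmap; apply/mapP; exists t => //; rewrite gt et.
have [b'p | /c_out //] := boolP (b \in act_image p xi).
pose s1 := [seq b' <- act_image p xi | b' != xi].
have c_fixed : c xi = `|c xi| ^+ 2 + \sum_(b' <- s1) `|c b'| ^+ 2.
  rewrite big_filter {1}/c mxcoef_projection //.
  have [xip | xip] := boolP (xi \in act_image p xi).
    by rewrite (bigD1_seq xi) ?undup_uniq.
  rewrite c_out // normr0 expr0n add0r [RHS]big_mkcond; apply: eq_big_seq => b' b'p'.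
  by case: eqVneq b'p' xip => // -> ->.
have := @eupu_sq_fixed _ _ R_subring R_eupu (c xi) (map c s1) (mxcoef_R _ _ p_R) _ _ (c b).
rewrite big_map; apply => //; first by move=> _ /mapP[b' _ ->]; apply: mxcoef_R.
by apply: map_f; rewrite mem_filter bxi' b'p.
Qed.

Lemma LI_nil : LI [::].
Proof.
apply: (LI_coef _ (LI_scale (rpred0 _) p_idem)) => m.
by rewrite coef_escale mul0r coef_nil.
Qed.

Definition depth : nat := \max_(t <- p) size t.2.2.2.

Definition expansion : elt := flatten [seq expand (depth - size t.2.2.2) t | t <- p].

Lemma LI_expansion : LI (esub p expansion).
Proof.
apply: (LI_esub_flatten LI_nil) => t tp.
by apply: (LI_expand LI_nil); apply: (allP p_R t tp).
Qed.

Lemma expansion_R : Rcomb R expansion.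
Proof.
apply/allP => t' /flattenP[_ /mapP[t tp ->] t't].
by have /eqP -> := allP (expand_scalar _ _) _ t't; apply: (allP p_R t tp).
Qed.

Lemma expansion_expanded : {in map snd expansion, forall m, good m -> expanded depth m}.
Proof.
move=> _ /mapP[t' /flattenP[_ /mapP[t tp ->] t't] ->] gt'.
case gt: (good t.2); last first.
  by move: t't; rewrite expand_nongood ?gt // inE => /eqP et; rewrite et gt in gt'.
have := expand_expanded gt t't gt'; rewrite subnKC //.
exact: (@leq_bigmax_seq _ p xpredT (fun t => size t.2.2.2)).
Qed.

Lemma mxcoef_expansion_diag xi b : boundary xi.1 -> b != xi -> mxcoef expansion xi b = 0.
Proof.
by move=> bxi bxi'; rewrite -(mxcoef_leq_eq LI_expansion) // mxcoef_projection_diag.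
Qed.

Lemma coef_expansion_offdiag m0 : good m0 -> m0.1 != m0.2 -> coef expansion m0 = 0.
Proof.
have [n] := ubnP (size m0.2.2); elim: n m0 => // n IH m0 /ltnSE sz gm0 ne.
apply/eqP/negP => /negP nz; have m0q := coef_neq0_mem nz.
pose xi := canon_state m0.2; pose ms := undup (map snd expansion).
have [b0 e0] : exists b0, act m0 xi = Some b0 by rewrite act_canon_state; eexists.
have b0xi : b0 != xi by move: (act_canon_state_neq ne); rewrite -/xi e0; apply: contra => /eqP ->.
have /and3P[_ pb _] := gm0.
have := mxcoef_expansion_diag (boundary_canon_state pb) b0xi.
rewrite /mxcoef (@wsum_coef _ _ _ _ _ ms) ?undup_uniq // => [|m]; last by rewrite mem_undup.
rewrite (bigD1_seq m0) ?mem_undup ?undup_uniq //= gm0 e0 eqxx mulr1 big1_seq ?addr0.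
  by move/eqP; rewrite (negbTE nz).
move=> m /andP[mm0]; rewrite mem_undup => mq.
case gm: (good m); last by rewrite mulr0.
case: eqP => [emxi | _]; last by rewrite mulr0.
have short := expanded_cmp (expansion_expanded m0q gm0) (expansion_expanded mq gm).
have [em | /andP[lt offd]] := act_canon_state_inv ne short (etrans emxi (esym e0)).
  by rewrite em eqxx in mm0.
by rewrite IH ?mul0r // (leq_trans lt sz).
Qed.

Lemma LI_nongood_part (x : elt) : LI [seq t <- x | ~~ good t.2 && (t.2.1 != t.2.2)].
Proof.
elim: x => [|[c m] x IH] /=; first exact: LI_nil.
by case: ifP => // /andP[bm _]; apply: LI_add (LI_bad R c bm) IH.
Qed.

Lemma projection_in_diagonal : in_diagonal R s r p.
Proof.
exists [seq t <- expansion | t.2.1 == t.2.2]; split.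
  apply/allP => t; rewrite mem_filter => /andP[-> tq].
  by rewrite (allP expansion_R t tq).
rewrite /leq_eq; apply: (LI_trans LI_expansion).
apply: (LI_coef _ (LI_nongood_part expansion)) => m.
rewrite coef_esub (coef_filter (fun m => ~~ good m && (m.1 != m.2)))
  (coef_filter (fun m => m.1 == m.2)).
case: (eqVneq m.1 m.2) => /= md; first by rewrite andbF subrr.
case gm: (good m) => /=; last by rewrite subr0.
by rewrite coef_expansion_offdiag // subrr.
Qed.

End Representation.

Theorem corollary5p7 (C : numClosedFieldType) (R : pred C)
  (HRsub : subring_closed R) (HRconj : forall x, x \in R -> x^* \in R)
  (HR : eupu R)
  (V E : finType) (s r : E -> V) (p : elt C V E) :
  is_projection R s r p -> in_diagonal R s r p.
Proof.
(* [HRconj] only makes L_R(E) closed under the involution; the argument never uses it. *)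
by move=> [p_R [p_idem p_selfadj]]; apply: (projection_in_diagonal HRsub HR p_R p_idem p_selfadj).
Qed.
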